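(* Let $X,Y$ be non-commuting indeterminates and $C=XYX^{-1}Y^{-1}$. Let $(R_n)_{n\in\mathbb Z}$ satisfy $$R_{2n}CR_{2n-2}=1+R_{2n-1},\qquad R_{2n+1}CR_{2n-1}=1+R_{2n}^4\qquad(n\in\mathbb Z),$$ with $R_1=YXY^{-1}$ and $R_2=Y$, and set $u_n=R_{2n}$, so that $u_1=Y$. Define $$y_1'=\big(Y^3+(1+X)Y^{-1}\big)X^{-1}Y^{-1},$$ $$y_2'=\big(Y+(1+X)Y^{-2}(1+X)Y^{-1}\big)X^{-1}Y^{-1},$$ $$y_3'=(1+X)Y^{-2}.$$ Then, as formal power series in a central variable $t$, $$\sum_{n\ge0}t^nu_{n+1}=\Big(1-ty_1'-t^2(1-ty_3')^{-1}y_2'\Big)^{-1}u_1.$$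
   Context: Work in the free skew field (non-commutative rational functions) over $\mathbb C$ generated by $X,Y$. The variable $t$ is a formal variable commuting with everything, and inverses of $1-(\text{terms of positive }t\text{-degree})$ are expanded as geometric series. *)

From HB Require Import structures.
From mathcomp Require Import all_boot all_order all_algebra.
From mathcomp Require Import complex.
From mathcomp Require Import Rstruct.
Set Implicit Arguments. Unset Strict Implicit. Unset Printing Implicit Defensive.
Import Order.TTheory GRing.Theory Num.Theory.
Local Open Scope ring_scope.

Definition Cplx : comUnitRingType := (Rdefinitions.R)[i].

Definition is_division_ring (K : unitRingType) : Prop :=
  forall x : K, x != 0 -> x \is a GRing.unit.

Definition generated_by (K : unitAlgType Cplx) (X Y : K) : Prop :=
  forall T : pred K,
    (forall c : Cplx, c%:A \in T) -> X \in T -> Y \in T ->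
    (forall x y, x \in T -> y \in T -> x + y \in T) ->
    (forall x, x \in T -> - x \in T) ->
    (forall x y, x \in T -> y \in T -> x * y \in T) ->
    (forall x, x \in T -> x^-1 \in T) ->
    forall x, x \in T.

(* A specialization K ~> L over C<X,Y> sending X |-> a, Y |-> b (Cohn):
   a local subring S of K containing C, X, Y and a ring homomorphism
   phi : S -> L over C with phi X = a, phi Y = b, whose kernel is the
   maximal ideal of S (elements of S not killed by phi are invertible in S). *)
Definition specialization (K L : unitAlgType Cplx) (X Y : K) (a b : L) : Prop :=
  exists (S : pred K) (phi : K -> L),
    (forall c : Cplx, c%:A \in S) /\ X \in S /\ Y \in S /\
    (forall x y, x \in S -> y \in S -> [/\ x + y \in S, - x \in S & x * y \in S]) /\
    (forall c : Cplx, phi (c%:A) = c%:A) /\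
    (forall x y, x \in S -> y \in S ->
        phi (x + y) = phi x + phi y /\ phi (x * y) = phi x * phi y) /\
    phi X = a /\ phi Y = b /\
    (forall x, x \in S -> phi x != 0 -> x^-1 \in S).

(* K, with the elements X and Y, is the free skew field (the universal field
   of fractions of the free algebra C<X,Y>, Cohn): K is a division C-algebra
   generated by X, Y, which specializes to every division C-algebra L at every
   pair (a, b) of elements of L. *)
Definition is_free_skew_field (K : unitAlgType Cplx) (X Y : K) : Prop :=
  [/\ is_division_ring K, generated_by X Y &
      forall (L : unitAlgType Cplx), is_division_ring L ->
        forall a b : L, specialization X Y a b].

Definition pser (K : ringType) := nat -> K.
Definition ps_const (K : ringType) (c : K) : pser K :=
  fun n => if n == 0%N then c else 0.
Definition ps_t (K : ringType) : pser K := fun n => if n == 1%N then 1 else 0.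
Definition ps_add (K : ringType) (f g : pser K) : pser K := fun n => f n + g n.
Definition ps_opp (K : ringType) (f : pser K) : pser K := fun n => - f n.
Definition ps_mul (K : ringType) (f g : pser K) : pser K :=
  fun n => \sum_(i < n.+1) f i * g (n - i)%N.
Fixpoint ps_pow (K : ringType) (f : pser K) (m : nat) : pser K :=
  match m with
  | 0%N => ps_const 1
  | m'.+1 => ps_mul f (ps_pow f m')
  end.
(* (1 - a)^{-1} for a of positive t-order, expanded as the geometric series
   sum_m a^m (the coefficient of t^n only involves m <= n). *)
Definition ps_geom (K : ringType) (a : pser K) : pser K :=
  fun n => \sum_(m < n.+1) ps_pow a m n.

Section Data.
Variable K : unitRingType.
Variables X Y : K.
Definition commC : K := X * Y * X^-1 * Y^-1.
Definition y1' : K := (Y ^+ 3 + (1 + X) * Y^-1) * X^-1 * Y^-1.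
Definition y2' : K := (Y + (1 + X) * Y^-2 * (1 + X) * Y^-1) * X^-1 * Y^-1.
Definition y3' : K := (1 + X) * Y^-2.
End Data.

From mathcomp Require Import all_boot all_order all_algebra.
From mathcomp Require Import complex Rstruct zify.
From Stdlib Require Import FunctionalExtensionality.
Import GRing.Theory Num.Theory.
Local Open Scope ring_scope.
Set Implicit Arguments. Unset Strict Implicit.

(* Each pair (R_{2n+1}, R_{2n+2}) can be written (y x y^-1, y) for a window (x, y) with
   x y x^-1 y^-1 = C; the recurrence moves the window by an explicit birational map that
   also preserves lin_coef x y.  Solving the recurrence inside a window gives the
   constant-coefficient recurrence u_{n+2} = P u_{n+1} - C u_n with P = y1' + y3' and
   C = y3' y1' - y2', which is the coefficient recurrence of
   (1 - t y1' - t^2 (1 - t y3')^-1 y2')^-1 u_1.  All the inverses exist because the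
   specialization X = Y = 1 sends every R_k, k >= 1, to a positive real number. *)

Lemma addr_pull (V : zmodType) (s s' d e : V) : s = s' + d -> s + e = (s' + e) + d.
Proof. by move->; rewrite addrAC. Qed.

Lemma addr_pull0 (V : zmodType) (d : V) : d = 0 + d.
Proof. by rewrite add0r. Qed.

Lemma addr_pull_step (V : zmodType) (l s s' d : V) : s = s' + d -> l = s' -> l + d = s.
Proof. by move=> -> ->. Qed.

Lemma addr_pull_last (V : zmodType) (d s : V) : s = 0 + d -> d = s.
Proof. by move=> ->; rewrite add0r. Qed.

Ltac addr_pull d s :=
  lazymatch s with
  | (?s' + d) => constr:(@erefl _ s)
  | d => constr:(addr_pull0 d)
  | (?s' + ?e) => let p := addr_pull d s' in constr:(addr_pull e p)
  end.

(* Closes [l = s] when both sides are left-nested sums of the same terms in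
   possibly different orders. *)
Ltac sum_perm :=
  lazymatch goal with
  | |- ?l + ?d = ?s => let p := addr_pull d s in apply: (addr_pull_step p); sum_perm
  | |- ?d = ?s => let p := addr_pull d s in apply: (addr_pull_last p)
  end.

Ltac ring_expand := rewrite ?exprS ?expr0;
  repeat (rewrite ?mulrDl ?mulrDr ?mul1r ?mulr1); rewrite ?mulrA ?addrA.

Lemma inv_eq (K : unitRingType) (a b : K) : a \is a GRing.unit -> a * b = 1 -> a^-1 = b.
Proof. by move=> ua hab; rewrite -[b](mulKr ua) hab mulr1. Qed.

Ltac unit_prod := rewrite ?unitrMl ?unitrV //.

Definition lin_coef (K : unitRingType) (x y : K) :=
  y^+3 * x^-1 * y^-1 + (1 + x) * y^-1 * x^-1 * (1 + x) * y^-1.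

(* The window (x, y) of the pair (R_{2n+1}, R_{2n+2}) = (y x y^-1, y) moves to
   (win_x, win_y) at the next pair; W = 1 + y^4 and Z = x + W are kept as
   variables so that the cancellation tactic can see them. *)
Section WindowMap.
Variable K : unitRingType.
Variables x y W Z : K.
Hypotheses (ux : x \is a GRing.unit) (uy : y \is a GRing.unit)
  (uW : W \is a GRing.unit) (uZ : Z \is a GRing.unit).
Hypotheses (W_def : W = 1 + y^+4) (Z_def : Z = x + W).

Ltac cancel_units :=
  rewrite ?(mulrK ux, mulrK uy, mulrK uW, mulrK uZ, divrK ux, divrK uy, divrK uW,
    divrK uZ, mulrV ux, mulrV uy, mulrV uW, mulrV uZ, mulVr ux, mulVr uy, mulVr uW,
    mulVr uZ, mul1r, mulr1).

Lemma Z_xV_W_sym : Z * x^-1 * W = W * x^-1 * Z.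
Proof. rewrite Z_def; ring_expand; cancel_units; sum_perm. Qed.

Lemma Z_WV_x_sym a : a * Z * W^-1 * x = a * x * W^-1 * Z.
Proof. rewrite -!(mulrA a); congr (a * _); rewrite Z_def; ring_expand; cancel_units; sum_perm. Qed.

Lemma yV_W_comm a : a * y^-1 * W = a * W * y^-1.
Proof.
rewrite -!(mulrA a); congr (a * _).
have yW : y * W = W * y by rewrite W_def; ring_expand; sum_perm.
by apply: (mulrI uy); rewrite !mulrA; cancel_units; rewrite yW -mulrA; cancel_units.
Qed.

Definition win_x := x * y * x^-1 * W * y^-1 * x^-1.
Definition win_y := Z * y^-1 * x^-1.

Lemma win_x_unit : win_x \is a GRing.unit.
Proof. by rewrite /win_x; unit_prod. Qed.

Lemma win_y_unit : win_y \is a GRing.unit.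
Proof. by rewrite /win_y; unit_prod. Qed.

Lemma win_xV : win_x^-1 = x * y * W^-1 * x * y^-1 * x^-1.
Proof. by apply: inv_eq; [exact: win_x_unit | rewrite /win_x !mulrA; cancel_units]. Qed.

Lemma win_yV : win_y^-1 = x * y * Z^-1.
Proof. by apply: inv_eq; [exact: win_y_unit | rewrite /win_y !mulrA; cancel_units]. Qed.

Lemma win_conj : win_y * win_x * win_y^-1 = W * x^-1.
Proof. by rewrite win_yV /win_x /win_y !mulrA; cancel_units; rewrite Z_xV_W_sym; cancel_units. Qed.

Lemma commC_win : commC win_x win_y = commC x y.
Proof.
rewrite /commC win_xV win_yV /win_x /win_y !mulrA; cancel_units.
by rewrite Z_WV_x_sym; cancel_units; rewrite -yV_W_comm; cancel_units.
Qed.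

Lemma lin_coef_win : lin_coef win_x win_y = lin_coef x y.
Proof.
have uWy : W * y \is a GRing.unit by unit_prod.
have win_x1 : 1 + win_x = x * y * x^-1 * Z * y^-1 * x^-1.
  by rewrite /win_x Z_def; ring_expand; cancel_units; sum_perm.
apply: (mulIr uWy).
have -> : lin_coef win_x win_y = Z * y^-1 * x^-1 * Z * y^-1 * W^-1 + x * y * y * W^-1.
  by rewrite /lin_coef win_x1 win_xV win_yV /win_y; ring_expand; cancel_units;
    rewrite Z_WV_x_sym; cancel_units.
by ring_expand; cancel_units; rewrite /lin_coef Z_def W_def; ring_expand; cancel_units; sum_perm.
Qed.

End WindowMap.

Section WindowTerms.
Variable K : unitRingType.
Variables x y : K.
Hypotheses (ux : x \is a GRing.unit) (uy : y \is a GRing.unit).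

Ltac cancel_units :=
  rewrite ?(mulrK ux, mulrK uy, divrK ux, divrK uy, mulrV ux, mulrV uy, mulVr ux,
    mulVr uy, mul1r, mulr1).

Lemma odd_term_of_window r3 :
  r3 * commC x y * (y * x * y^-1) = 1 + y^+4 -> r3 = (1 + y^+4) * x^-1.
Proof. by move=> <-; rewrite /commC !mulrA; cancel_units. Qed.

Lemma even_term_of_window r4 :
  r4 * commC x y * y = 1 + (1 + y^+4) * x^-1 -> r4 = (x + (1 + y^+4)) * y^-1 * x^-1.
Proof.
move=> h; have r4_conj : r4 * (x * y * x^-1) = 1 + (1 + y^+4) * x^-1.
  by rewrite -h /commC !mulrA; cancel_units.
have -> : r4 = r4 * (x * y * x^-1) * (x * y^-1 * x^-1) by rewrite !mulrA; cancel_units.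
by rewrite r4_conj; ring_expand; cancel_units; sum_perm.
Qed.

Lemma prev_even_term_of_window r0 :
  y * commC x y * r0 = 1 + y * x * y^-1 -> commC x y * r0 = y^-1 + x * y^-1.
Proof. by move=> h; apply: (mulrI uy); rewrite mulrA h; ring_expand; cancel_units; sum_perm. Qed.

Lemma even_term_lin :
  (x + (1 + y^+4)) * y^-1 * x^-1 = lin_coef x y * y - (y^-1 + x * y^-1).
Proof. by apply/eqP; rewrite eq_sym subr_eq; apply/eqP; rewrite /lin_coef; ring_expand; cancel_units; sum_perm. Qed.

Lemma y1'_y3'_lin_coef : y1' x y + y3' x y = lin_coef x y.
Proof. by rewrite /y1' /y3' /lin_coef -!exprVn; ring_expand; cancel_units; sum_perm. Qed.

Lemma y2'_commC : y2' x y + commC x y = y3' x y * y1' x y.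
Proof. by rewrite /y1' /y2' /y3' /commC -!exprVn; ring_expand; cancel_units; sum_perm. Qed.

Lemma y1'_mulr : y1' x y * y = (x + (1 + y^+4)) * y^-1 * x^-1.
Proof. by rewrite /y1'; ring_expand; cancel_units; sum_perm. Qed.

End WindowTerms.

Section PowerSeries.
Variable K : nzRingType.

Lemma ps_mul_constE (f : pser K) c n : ps_mul f (ps_const c) n = f n * c.
Proof.
rewrite /ps_mul big_ord_recr /= subnn /ps_const eqxx big1 ?add0r // => i _.
by rewrite subn_eq0 leqNgt ltn_ord mulr0.
Qed.

Lemma ps_mul_monomialE (f g : pser K) k c n :
  (forall i, f i = if i == k then c else 0) ->
  ps_mul f g n = if (k <= n)%N then c * g (n - k)%N else 0.
Proof.
move=> fE; rewrite /ps_mul; case: (leqP k n) => [kn | nk].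
  rewrite (bigD1 (Ordinal (kn : k < n.+1)%N)) //= fE eqxx big1 ?addr0 // => i ik.
  by rewrite fE ifN ?mul0r //; apply: contraNneq ik => ik; apply: val_inj.
by rewrite big1 // => i _; rewrite fE ltn_eqF ?mul0r // (leq_trans (ltn_ord i) nk).
Qed.

Lemma ps_t2E n : ps_mul (ps_t K) (ps_t K) n = if n == 2%N then 1 else 0.
Proof. by rewrite (@ps_mul_monomialE _ _ 1 1) // mul1r /ps_t; case: n => [|[|[|n]]]. Qed.

Lemma ps_tcE c n : ps_mul (ps_t K) (ps_const c) n = if n == 1%N then c else 0.
Proof. by rewrite ps_mul_constE /ps_t; case: eqP; rewrite ?mul1r ?mul0r. Qed.

Lemma ps_pow_tcE c m n :
  ps_pow (ps_mul (ps_t K) (ps_const c)) m n = if n == m then c ^+ m else 0.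
Proof.
elim: m n => [|m IH] n /=; first by rewrite /ps_const expr0.
rewrite (@ps_mul_monomialE _ _ 1 c) => [|i]; last exact: ps_tcE.
by case: n => [|n] //=; rewrite subn1 /= IH eqSS; case: eqP; rewrite ?exprS ?mulr0.
Qed.

Lemma ps_geom_tcE c n : ps_geom (ps_mul (ps_t K) (ps_const c)) n = c ^+ n.
Proof.
rewrite /ps_geom big_ord_recr /= ps_pow_tcE eqxx big1 ?add0r // => i _.
by rewrite ps_pow_tcE gtn_eqF.
Qed.

Definition ps_kernel (y1 y2 y3 : K) : pser K :=
  ps_add (ps_mul (ps_t K) (ps_const y1))
         (ps_mul (ps_mul (ps_mul (ps_t K) (ps_t K))
                         (ps_geom (ps_mul (ps_t K) (ps_const y3))))
                 (ps_const y2)).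

Lemma ps_kernelE y1 y2 y3 n : ps_kernel y1 y2 y3 n =
  (if n == 1%N then y1 else 0) + (if (2 <= n)%N then y3 ^+ (n - 2) * y2 else 0).
Proof.
rewrite /ps_kernel /ps_add ps_tcE ps_mul_constE (@ps_mul_monomialE _ _ 2 1);
  last exact: ps_t2E.
by case: (leqP 2 n) => _; rewrite ?mul1r ?ps_geom_tcE ?mul0r.
Qed.

Lemma ps_kernel_conv y1 y2 y3 (v : nat -> K) k :
  \sum_(i < k.+2) ps_kernel y1 y2 y3 i * v (k.+1 - i)%N =
  y1 * v k + \sum_(i < k) y3 ^+ i * y2 * v (k - i.+1)%N.
Proof.
rewrite !big_ord_recl !ps_kernelE /= !addr0 mul0r add0r subn1; congr (_ + _).
by apply: eq_bigr => i _; rewrite ps_kernelE add0r /bump /= !add1n subn2 subSS.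
Qed.

Section GeometricSeries.
Variable A : pser K.
Hypothesis A0 : A 0%N = 0.

Lemma ps_pow_order m n : (n < m)%N -> ps_pow A m n = 0.
Proof.
elim: m n => [|m IH] n //= nm; rewrite /ps_mul big1 // => i _.
case: (posnP i) => [->|i_gt0]; first by rewrite A0 mul0r.
by rewrite IH ?mulr0 //; move: (ltn_ord i); lia.
Qed.

Lemma ps_geom_trunc N n : (n < N)%N -> ps_geom A n = \sum_(m < N) ps_pow A m n.
Proof.
elim: N => [|N IH] //; rewrite ltnS leq_eqVlt => /orP [/eqP -> //|nN].
by rewrite big_ord_recr /= -IH // ps_pow_order // addr0.
Qed.

Lemma ps_geom_rec n : ps_geom A n =
  (if n == 0%N then 1 else 0) + \sum_(i < n.+1) A i * ps_geom A (n - i)%N.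
Proof.
case: n => [|k]; first by rewrite /ps_geom !big_ord1 /= A0 mul0r addr0.
rewrite /= add0r {1}/ps_geom big_ord_recl /= add0r.
rewrite (eq_bigr (fun m : 'I_k.+1 => \sum_(i < k.+2) A i * ps_pow A m (k.+1 - i)%N)) //.
rewrite exchange_big /=; apply: eq_bigr => i _; rewrite -mulr_sumr.
case: (posnP i) => [->|i_gt0]; first by rewrite A0 !mul0r.
by rewrite (@ps_geom_trunc k.+1) //; move: (ltn_ord i); lia.
Qed.

Lemma ps_geom_unique (c : K) (v : nat -> K) :
  (forall n, v n = (if n == 0%N then c else 0) + \sum_(i < n.+1) A i * v (n - i)%N) ->
  v = ps_mul (ps_geom A) (ps_const c).
Proof.
move=> vE; apply: functional_extensionality; elim/ltn_ind => n IH.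
rewrite ps_mul_constE vE ps_geom_rec mulrDl mulr_suml; congr (_ + _).
  by case: (n == 0%N); rewrite ?mul1r ?mul0r.
apply: eq_bigr => i _; case: (posnP i) => [->|i_gt0]; first by rewrite A0 !mul0r.
by rewrite IH ?ps_mul_constE ?mulrA //; move: (ltn_ord i); lia.
Qed.

End GeometricSeries.

Lemma three_term_series y1 y2 y3 (v : nat -> K) :
  v 1%N = y1 * v 0%N ->
  (forall k, v k.+2 = (y1 + y3) * v k.+1 - (y3 * y1 - y2) * v k) ->
  v = ps_mul (ps_geom (ps_kernel y1 y2 y3)) (ps_const (v 0%N)).
Proof.
move=> v1 vrec; pose tail k := \sum_(i < k) y3 ^+ i * y2 * v (k - i.+1)%N.
have tailS k : tail k.+1 = y2 * v k + y3 * tail k.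
  rewrite /tail big_ord_recl /= expr0 mul1r subn1 mulr_sumr; congr (_ + _).
  by apply: eq_bigr => i _; rewrite /bump /= add1n subSS exprS !mulrA.
have vS k : v k.+1 = y1 * v k + tail k.
  elim: k => [|k IH]; first by rewrite v1 /tail big_ord0 addr0.
  have -> : tail k.+1 = y2 * v k + y3 * (v k.+1 - y1 * v k).
    by rewrite tailS IH addrAC subrr add0r.
  by rewrite vrec mulrDl mulrBl opprB mulrBr !mulrA !addrA [y1 * _ + y3 * _ + _]addrAC.
apply: ps_geom_unique => [|[|k]]; first by rewrite ps_kernelE addr0.
  by rewrite big_ord1 ps_kernelE addr0 mul0r addr0.
by rewrite add0r ps_kernel_conv vS.
Qed.

End PowerSeries.

Definition unit_cone (K : unitRingType) (P : K -> Prop) :=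
  [/\ P 1, forall a b, P a -> P b -> P (a + b), forall a b, P a -> P b -> P (a * b),
      forall a, P a -> P a^-1 & forall a, P a -> a \is a GRing.unit].

Lemma Cplx_division_ring : is_division_ring Cplx^o.
Proof. by move=> x x_neq0; change (x \is a @GRing.unit Rdefinitions.R[i]); rewrite unitfE. Qed.

(* Specializing X, Y to 1 in C, the elements sent to positive reals form a unit cone. *)
Lemma free_skew_field_unit_cone (K : unitAlgType Cplx) (X Y : K) :
  is_free_skew_field X Y -> exists P : K -> Prop, [/\ unit_cone P, P X & P Y].
Proof.
case=> Kdiv _ /(_ _ Cplx_division_ring 1 1).
case=> S [phi [S_scal [SX [SY [S_ring [phi_scal [phi_ring [phiX [phiY S_inv]]]]]]]]].
have S1 : 1 \in S by have := S_scal 1; rewrite scale1r.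
have phi1 : phi 1 = 1 by have := phi_scal 1; rewrite !scale1r.
have phi0 : phi 0 = 0 by have := phi_scal 0; rewrite !scale0r.
pose P a := a \in S /\ (0 : Rdefinitions.R[i]) < phi a.
have P_unit a : P a -> a \is a GRing.unit.
  by case=> _ /lt0r_neq0 pa; apply: Kdiv; apply: contraNneq pa => ->; rewrite phi0.
have PX : P X by split; rewrite // phiX.
have PY : P Y by split; rewrite // phiY.
exists P; split=> //.
split=> // [|a b [Sa pa] [Sb pb]|a b [Sa pa] [Sb pb]|a [Sa pa]].
- by split; rewrite ?phi1.
- have [Sab _ _] := S_ring a b Sa Sb; split=> //.
  by have [-> _] := phi_ring a b Sa Sb; apply: addr_gt0.
- have [_ _ Sab] := S_ring a b Sa Sb; split=> //.
  by have [_ ->] := phi_ring a b Sa Sb; apply: mulr_gt0.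
- have Sa' := S_inv a Sa (lt0r_neq0 pa).
  have phiV : phi a * phi a^-1 = 1.
    have [_ <-] := phi_ring a a^-1 Sa Sa'.
    by rewrite mulrV ?phi1 //; apply: P_unit.
  split=> //; rewrite -(inv_eq (Cplx_division_ring (lt0r_neq0 pa)) phiV).
  by change (0 < (phi a : Rdefinitions.R[i])^-1); rewrite invr_gt0.
Qed.

Section Recurrence.
Variable K : unitRingType.
(* e n and o n stand for R_{2n} and R_{2n+1}. *)
Variables (X Y : K) (e o : nat -> K).
Local Notation C := (commC X Y).
Hypotheses (uX : X \is a GRing.unit) (uY : Y \is a GRing.unit).
Hypothesis rec_even : forall n, e n.+1 * C * e n = 1 + o n.
Hypothesis rec_odd : forall n, o n.+1 * C * o n = 1 + e n.+1 ^+ 4.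
Hypotheses (o0 : o 0%N = Y * X * Y^-1) (e1 : e 1%N = Y).

Lemma terms_in_unit_cone P : unit_cone P -> P X -> P Y -> forall n, P (o n) /\ P (e n.+1).
Proof.
case=> P1 PD PM PV Punit PX PY.
have PC : P C by apply: (PM); [apply: (PM); [apply: (PM) | apply: (PV)] | apply: (PV)].
have solve a b c : P b -> a * C * b = c -> a = c * b^-1 * C^-1.
  by move=> Pb <-; rewrite !mulrK ?Punit.
elim=> [|n [Po Pe]].
  by rewrite o0 e1; split=> //; apply: (PM); [apply: (PM) | apply: (PV)].
have Pexp a m : P a -> P (a ^+ m).
  by move=> Pa; elim: m => [|m IH]; rewrite ?expr0 ?exprS //; apply: (PM).
have Po' : P (o n.+1).
  rewrite (solve _ _ _ Po (rec_odd n)); apply: (PM); last exact: (PV).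
  by apply: (PM); [apply: (PD) => //; apply: (Pexp) | apply: (PV)].
split=> //; rewrite (solve _ _ _ Pe (rec_even n.+1)); apply: (PM); last exact: (PV).
by apply: (PM); [apply: (PD) | apply: (PV)].
Qed.

Hypothesis terms_unit : forall n, o n \is a GRing.unit /\ e n.+1 \is a GRing.unit.

Definition window n x y := [/\ x \is a GRing.unit, y \is a GRing.unit,
  o n = y * x * y^-1, e n.+1 = y & commC x y = C].

Lemma window0 : window 0 X Y.
Proof. by []. Qed.

Lemma window_next_odd n x y : window n x y -> o n.+1 = (1 + y^+4) * x^-1.
Proof. by case=> ux uy on en c; apply: odd_term_of_window => //; rewrite c -on -en. Qed.

Lemma window_next_even n x y :
  window n x y -> e n.+2 = (x + (1 + y^+4)) * y^-1 * x^-1.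
Proof.
move=> w; case: (w) => ux uy on en c; apply: even_term_of_window => //.
by rewrite c -(window_next_odd w) -en.
Qed.

Lemma window_step n x y : window n x y ->
  exists x' y', window n.+1 x' y' /\ lin_coef x' y' = lin_coef x y.
Proof.
move=> w; have oS := window_next_odd w; have eS := window_next_even w.
case: w => ux uy on en c.
have uW : 1 + y^+4 \is a GRing.unit.
  by rewrite -(divrK ux (1 + _)) -oS unitrMl // (terms_unit n.+1).1.
have uZ : x + (1 + y^+4) \is a GRing.unit.
  rewrite -(divrK uy (x + _)) -(divrK ux (_ / y)) -eS !unitrMl //.
  exact: (terms_unit n.+1).2.
exists (win_x x y (1 + y^+4)), (win_y x y (x + (1 + y^+4))); split.
  split; [exact: win_x_unit | exact: win_y_unit | by rewrite win_conj | by [] |].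
  by rewrite commC_win.
by rewrite lin_coef_win.
Qed.

Lemma windows n : exists x y, window n x y /\ lin_coef x y = lin_coef X Y.
Proof.
elim: n => [|n [x [y [w <-]]]]; first by exists X, Y.
exact: window_step w.
Qed.

Lemma even_lin_rec n : e n.+2 = lin_coef X Y * e n.+1 - C * e n.
Proof.
have [x [y [w <-]]] := windows n; rewrite (window_next_even w).
case: w => ux uy on en c; rewrite even_term_lin // -c en.
by rewrite (@prev_even_term_of_window _ x y) // c -on -en.
Qed.

Lemma even2 : e 2%N = y1' X Y * e 1%N.
Proof. by rewrite e1 y1'_mulr // (window_next_even window0). Qed.

End Recurrence.

Theorem theorem4p9 (K : unitAlgType Cplx) (X Y : K) (R : int -> K) :
  is_free_skew_field X Y ->
  (forall n : int, R (2 * n) * commC X Y * R (2 * n - 2) = 1 + R (2 * n - 1)) ->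
  (forall n : int, R (2 * n + 1) * commC X Y * R (2 * n - 1) = 1 + R (2 * n) ^+ 4) ->
  R 1 = Y * X * Y^-1 ->
  R 2 = Y ->
  let u := fun n : nat => R (2 * n%:Z) in
  let A : pser K :=
    ps_add (ps_mul (ps_t K) (ps_const (y1' X Y)))
           (ps_mul (ps_mul (ps_mul (ps_t K) (ps_t K))
                           (ps_geom (ps_mul (ps_t K) (ps_const (y3' X Y)))))
                   (ps_const (y2' X Y))) in
  (fun n : nat => u n.+1) = ps_mul (ps_geom A) (ps_const (u 1%N)).
Proof.
move=> free R_even R_odd R1 R2 u A; pose o n := R (2 * n%:Z + 1).
have rec_even n : u n.+1 * commC X Y * u n = 1 + o n.
  have := R_even n.+1; have -> : 2 * (n.+1)%:Z - 2 = 2 * n%:Z by lia.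
  by have -> : 2 * (n.+1)%:Z - 1 = 2 * n%:Z + 1 by lia.
have rec_odd n : o n.+1 * commC X Y * o n = 1 + u n.+1 ^+ 4.
  by have := R_odd n.+1; have -> : 2 * (n.+1)%:Z - 1 = 2 * n%:Z + 1 by lia.
have o0 : o 0%N = Y * X * Y^-1 by rewrite /o mulr0 add0r.
have u1 : u 1%N = Y by rewrite /u mulr1.
have [P [Pcone PX PY]] := free_skew_field_unit_cone free.
have [_ _ _ _ Punit] := Pcone.
have terms_unit n : o n \is a GRing.unit /\ u n.+1 \is a GRing.unit.
  by have [/Punit ? /Punit ?] := terms_in_unit_cone rec_even rec_odd o0 u1 Pcone PX PY n.
have [uX uY] := (Punit _ PX, Punit _ PY).
apply: three_term_series => [|k]; first exact: even2.
rewrite (even_lin_rec uX uY rec_even rec_odd o0 u1 terms_unit).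
by rewrite -y1'_y3'_lin_coef // -y2'_commC // addrAC subrr add0r.
Qed.
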